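(* Let $\mathsf{K}$ be a universal class of $\mathcal{L}$-algebras. If $\mathrm{Th}(\mathsf{K})$ has a model completion, then $\mathsf{K}$ has the variable projection property.
   Context: $\mathcal{L}$ is an algebraic first-order language with at least one constant symbol. A universal class is closed under isomorphic images, subalgebras and ultraproducts. A model completion of a theory $T$ is a model complete theory $T^*$ with the same universal consequences as $T$ such that for every model $M$ of $T$, $T^*$ plus the diagram of $M$ is complete. $\mathsf{K}\models\alpha$ (for quantifier-free $\alpha$) means all members satisfy $\alpha$ under all assignments. $\mathsf{K}$ has the variable projection property if for every finite set of variables $\overline{x}$, variable $y\notin\overline{x}$, and conjunction of equations $\varphi(\overline{x},y)$ there is a quantifier-free formula $\xi(\overline{x})$ such that $\mathsf{K}\models\varphi\to\xi$ and for every equation $\varepsilon(\overline{x})$, $\mathsf{K}\models\varphi\to\varepsilon$ implies $\mathsf{K}\models\xi\to\varepsilon$. *)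

From Stdlib Require Import List.
From Stdlib Require Vectors.Fin.
Import ListNotations.

Set Implicit Arguments.

Record Lang := { Fsym : Type; arity : Fsym -> nat }.

Definition has_constant (L : Lang) : Prop := exists c : Fsym L, arity L c = 0.

Definition Lexp (L : Lang) (C : Type) : Lang :=
  {| Fsym := (Fsym L + C)%type;
     arity := fun s => match s with inl f => arity L f | inr _ => 0 end |}.

Inductive term (L : Lang) : Type :=
| var : nat -> term L
| app : forall f : Fsym L, (Fin.t (arity L f) -> term L) -> term L.
Arguments var {L} _.

Inductive formula (L : Lang) : Type :=
| Fal  : formula L
| Eq   : term L -> term L -> formula L
| Neg  : formula L -> formula L
| Conj : formula L -> formula L -> formula L
| Disj : formula L -> formula L -> formula L
| Imp  : formula L -> formula L -> formula L
| Ex   : nat -> formula L -> formula L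
| All  : nat -> formula L -> formula L.
Arguments Fal {L}.

Fixpoint tvars_in (L : Lang) (P : nat -> Prop) (t : term L) : Prop :=
  match t with
  | var n => P n
  | app f a => forall i, tvars_in P (a i)
  end.

Fixpoint fvars_in (L : Lang) (P : nat -> Prop) (phi : formula L) : Prop :=
  match phi with
  | Fal => True
  | Eq t1 t2 => tvars_in P t1 /\ tvars_in P t2
  | Neg p => fvars_in P p
  | Conj p q | Disj p q | Imp p q => fvars_in P p /\ fvars_in P q
  | Ex x p | All x p => fvars_in (fun n => n = x \/ P n) p
  end.

Definition sentence (L : Lang) (phi : formula L) : Prop :=
  fvars_in (fun _ => False) phi.

Fixpoint qfree (L : Lang) (phi : formula L) : Prop :=
  match phi with
  | Fal | Eq _ _ => True
  | Neg p => qfree p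
  | Conj p q | Disj p q | Imp p q => qfree p /\ qfree q
  | Ex _ _ | All _ _ => False
  end.

Fixpoint universal (L : Lang) (phi : formula L) : Prop :=
  match phi with
  | All _ p => universal p
  | p => qfree p
  end.

Record structure (L : Lang) := {
  carrier :> Type;
  interp : forall f : Fsym L, (Fin.t (arity L f) -> carrier) -> carrier }.

Fixpoint eval (L : Lang) (A : structure L) (e : nat -> A) (t : term L) : A :=
  match t with
  | var n => e n
  | app f a => interp A f (fun i => eval A e (a i))
  end.

Definition upd (A : Type) (e : nat -> A) (x : nat) (a : A) : nat -> A :=
  fun n => if Nat.eqb n x then a else e n.

Fixpoint sat (L : Lang) (A : structure L) (e : nat -> A) (phi : formula L)
  : Prop :=
  match phi with
  | Fal => False
  | Eq t1 t2 => eval A e t1 = eval A e t2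
  | Neg p => ~ sat A e p
  | Conj p q => sat A e p /\ sat A e q
  | Disj p q => sat A e p \/ sat A e q
  | Imp p q => sat A e p -> sat A e q
  | Ex x p => exists a : A, sat A (upd e x a) p
  | All x p => forall a : A, sat A (upd e x a) p
  end.

Definition hom (L : Lang) (A B : structure L) (h : A -> B) : Prop :=
  forall f (args : Fin.t (arity L f) -> A),
    h (interp A f args) = interp B f (fun i => h (args i)).

Definition embedding (L : Lang) (A B : structure L) (h : A -> B) : Prop :=
  hom A B h /\ (forall a b, h a = h b -> a = b).

Definition isomorphism (L : Lang) (A B : structure L) (h : A -> B) : Prop :=
  embedding A B h /\ (forall b, exists a, h a = b).

Definition elementary (L : Lang) (A B : structure L) (h : A -> B) : Prop :=
  forall (phi : formula L) (e : nat -> A), sat A e phi <-> sat B (fun n => h (e n)) phi.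

Definition op_closed (L : Lang) (A : structure L) (P : A -> Prop) : Prop :=
  forall f (args : Fin.t (arity L f) -> A),
    (forall i, P (args i)) -> P (interp A f args).

Definition subalgebra (L : Lang) (A : structure L) (P : A -> Prop)
  (HP : op_closed A P) : structure L :=
  {| carrier := { x : A | P x };
     interp := fun f args =>
       exist P (interp A f (fun i => proj1_sig (args i)))
             (HP f _ (fun i => proj2_sig (args i))) |}.

Definition ultrafilter (I : Type) (U : (I -> Prop) -> Prop) : Prop :=
  U (fun _ => True) /\ ~ U (fun _ => False) /\
  (forall S T : I -> Prop, U S -> (forall i, S i -> T i) -> U T) /\
  (forall S T : I -> Prop, U S -> U T -> U (fun i => S i /\ T i)) /\
  (forall S : I -> Prop, U S \/ U (fun i => ~ S i)).

(** B is (a realization of) the ultraproduct prod_U A_i: pi is the quotient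
    map from the direct product onto B, identifying U-almost-equal
    tuples, and operations are computed coordinatewise. *)
Definition is_ultraproduct (L : Lang) (I : Type) (U : (I -> Prop) -> Prop)
  (A : I -> structure L) (B : structure L) : Prop :=
  exists pi : (forall i, A i) -> B,
    (forall b, exists a, pi a = b) /\
    (forall a a', pi a = pi a' <-> U (fun i => a i = a' i)) /\
    (forall f (args : Fin.t (arity L f) -> forall i, A i),
        pi (fun i => interp (A i) f (fun k => args k i))
        = interp B f (fun k => pi (args k))).

Definition universal_class (L : Lang) (K : structure L -> Prop) : Prop :=
  (forall (A B : structure L) (h : A -> B), K A -> isomorphism A B h -> K B) /\
  (forall (A : structure L) (P : A -> Prop) (HP : op_closed A P),
      K A -> K (@subalgebra L A P HP)) /\
  (forall (I : Type) (U : (I -> Prop) -> Prop) (A : I -> structure L)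
          (B : structure L),
      ultrafilter U -> (forall i, K (A i)) -> is_ultraproduct U A B -> K B).

Definition theory (L : Lang) := formula L -> Prop.

Definition models (L : Lang) (T : theory L) (A : structure L) : Prop :=
  forall phi, T phi -> forall e : nat -> A, sat A e phi.

Definition entails (L : Lang) (T : theory L) (phi : formula L) : Prop :=
  forall A : structure L, models T A -> forall e : nat -> A, sat A e phi.

Definition Th (L : Lang) (K : structure L -> Prop) : theory L :=
  fun phi => sentence phi /\ forall A, K A -> forall e : nat -> A, sat A e phi.

Definition complete (L : Lang) (T : theory L) : Prop :=
  forall phi, sentence phi -> entails T phi \/ entails T (Neg phi).

Definition model_complete (L : Lang) (T : theory L) : Prop :=
  forall (A B : structure L) (h : A -> B),
    models T A -> models T B -> embedding A B h -> elementary A B h.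

Fixpoint tlift (L : Lang) (C : Type) (t : term L) : term (Lexp L C) :=
  match t with
  | var n => var n
  | app f a => @app (Lexp L C) (inl f) (fun i => tlift C (a i))
  end.

Fixpoint flift (L : Lang) (C : Type) (phi : formula L) : formula (Lexp L C) :=
  match phi with
  | Fal => Fal
  | Eq t1 t2 => Eq (tlift C t1) (tlift C t2)
  | Neg p => Neg (flift C p)
  | Conj p q => Conj (flift C p) (flift C q)
  | Disj p q => Disj (flift C p) (flift C q)
  | Imp p q => Imp (flift C p) (flift C q)
  | Ex x p => Ex x (flift C p)
  | All x p => All x (flift C p)
  end.

Definition lift_theory (L : Lang) (C : Type) (T : theory L) : theory (Lexp L C) :=
  fun psi => exists phi, T phi /\ psi = flift C phi.

Definition expand (L : Lang) (M : structure L) : structure (Lexp L M) :=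
  {| carrier := M;
     interp := fun s =>
       match s return (Fin.t (arity (Lexp L M) s) -> M) -> M with
       | inl f => fun args => interp M f args
       | inr m => fun _ => m
       end |}.

Definition diagram (L : Lang) (M : structure L) : theory (Lexp L M) :=
  fun psi => sentence psi /\
    (exists t1 t2, psi = Eq t1 t2 \/ psi = Neg (Eq t1 t2)) /\
    (forall e : nat -> M, sat (expand M) e psi).

Definition model_completion (L : Lang) (T Tstar : theory L) : Prop :=
  model_complete Tstar /\
  (forall phi, sentence phi -> universal phi ->
       (entails T phi <-> entails Tstar phi)) /\
  (forall M : structure L, models T M ->
       complete (fun psi => @lift_theory L M Tstar psi \/ diagram M psi)).

Definition Kvalid (L : Lang) (K : structure L -> Prop) (alpha : formula L) : Prop :=
  forall A, K A -> forall e : nat -> A, sat A e alpha.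

Definition eq_conj (L : Lang) (eqs : list (term L * term L)) : formula L :=
  fold_right (fun p acc => Conj (Eq (fst p) (snd p)) acc) (Neg Fal) eqs.

Definition var_projection (L : Lang) (K : structure L -> Prop) : Prop :=
  forall (xs : list nat) (y : nat), ~ In y xs ->
  forall eqs : list (term L * term L),
    (forall p, In p eqs ->
       tvars_in (fun v => In v xs \/ v = y) (fst p) /\
       tvars_in (fun v => In v xs \/ v = y) (snd p)) ->
    exists xi : formula L,
      qfree xi /\ fvars_in (fun v => In v xs) xi /\
      Kvalid K (Imp (eq_conj eqs) xi) /\
      (forall t1 t2 : term L,
          tvars_in (fun v => In v xs) t1 -> tvars_in (fun v => In v xs) t2 ->
          Kvalid K (Imp (eq_conj eqs) (Eq t1 t2)) ->
          Kvalid K (Imp xi (Eq t1 t2))).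

(* Let T* be the model completion of Th(K).  Since T* and Th(K) have the
   same universal consequences, every model of T* lies in K and every member of K
   embeds into a model of T* (a structure satisfying the universal theory of an
   ultraproduct-closed class embeds into a member of it, by compactness over its finite
   diagrams).  Since T* plus the diagram of any M in K is complete, an existential
   statement with parameters in M holds in one model of T* extending M iff it holds in
   all of them.

   Take for xi a finite conjunction of quantifier-free consequences, over T*, of
   (exists y, phi(x, y)).  It exists by compactness: otherwise some model C of T* and
   tuple c satisfy all such consequences but not (exists y, phi(c, y)).  The subalgebra A
   of C generated by c is in K, and every finite part of its diagram is consistent with
   T* + (exists y, phi(c, y)), since its negation would be one of these consequences; so
   A embeds into a model of T* where (exists y, phi(c, y)) holds, and transferring this
   along A <= C gives a contradiction.  Then phi implies xi in K because members of K
   embed into models of T*, and xi implies every equation implied by phi because a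
   solution of xi in A in K extends to a solution of phi in a model of T* containing A,
   and that model lies in K. *)

From Pilot Require Import Defs.
From Stdlib Require Import List PeanoNat Lia Classical ClassicalEpsilon
  FunctionalExtensionality PropExtensionality ProofIrrelevance.
From mathcomp Require filter.
Import ListNotations.

Lemma ultrafilter_on_lists (X : Type) :
  exists U : (list X -> Prop) -> Prop, ultrafilter U /\ forall x, U (fun l => In x l).
Proof.
  set (F := fun S : list X -> Prop => exists l0, forall l, incl l0 l -> S l).
  assert (HF : filter.ProperFilter F).
  { constructor.
    - intros [l0 H]. exact (H l0 (incl_refl l0)).
    - constructor.
      + exists nil. intros; exact I.
      + intros S T [l1 H1] [l2 H2]. exists (l1 ++ l2). intros l Hl. split.
        * apply H1. intros z Hz. apply Hl, in_or_app. now left.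
        * apply H2. intros z Hz. apply Hl, in_or_app. now right.
      + intros S T HST [l0 H]. exists l0. intros l Hl. apply HST, H, Hl. }
  destruct (filter.ultraFilterLemma HF) as [U [HU HFU]].
  exists U. split.
  - split; [exact filter.filterT|].
    split; [exact (filter.filter_not_empty U)|].
    split; [intros S T HS HST; exact (filter.filterS HST HS)|].
    split; [intros S T HS HT; exact (filter.filterI HS HT)|].
    intro S. exact (filter.in_ultra_setVsetC S HU).
  - intro x. apply HFU. exists [x]. intros l Hl. apply Hl. now left.
Qed.

Section UltrafilterFacts.
Variables (I : Type) (U : (I -> Prop) -> Prop).
Hypothesis HU : ultrafilter U.

Lemma ultraT : U (fun _ => True).
Proof. apply HU. Qed.

Lemma ultra_not_empty : ~ U (fun _ => False).
Proof. apply HU. Qed.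

Lemma ultraS (S T : I -> Prop) : U S -> (forall i, S i -> T i) -> U T.
Proof. apply HU. Qed.

Lemma ultraI (S T : I -> Prop) : U S -> U T -> U (fun i => S i /\ T i).
Proof. apply HU. Qed.

Lemma ultra_or_compl (S : I -> Prop) : U S \/ U (fun i => ~ S i).
Proof. apply HU. Qed.

Lemma ultra_all (S : I -> Prop) : (forall i, S i) -> U S.
Proof. intro H. apply (ultraS _ _ ultraT). auto. Qed.

Lemma ultraN (S : I -> Prop) : U (fun i => ~ S i) <-> ~ U S.
Proof.
  split.
  - intros HnS HS. apply ultra_not_empty. apply (ultraS _ _ (ultraI _ _ HnS HS)). tauto.
  - intro HnS. destruct (ultra_or_compl S); tauto.
Qed.

Lemma ultraU (S T : I -> Prop) : U (fun i => S i \/ T i) -> U S \/ U T.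
Proof.
  intro HST. destruct (ultra_or_compl S) as [HS|HnS]; [now left|right].
  apply (ultraS _ _ (ultraI _ _ HST HnS)). tauto.
Qed.

Lemma ultra_forall_fin (n : nat) (S : Fin.t n -> I -> Prop) :
  (forall k, U (S k)) -> U (fun i => forall k, S k i).
Proof.
  induction n as [|n IH]; intro H.
  - apply ultra_all. intros i k. exact (Fin.case0 (fun k => S k i) k).
  - pose proof (IH (fun k => S (Fin.FS k)) (fun k => H (Fin.FS k))) as HS.
    apply (ultraS _ _ (ultraI _ _ (H Fin.F1) HS)).
    intros i [H1 HFS] k. apply (Fin.caseS' k (fun k => S k i)); auto.
Qed.
End UltrafilterFacts.

Arguments ultraT {I U} HU.
Arguments ultra_not_empty {I U} HU.
Arguments ultraS {I U} HU {S T}.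
Arguments ultraI {I U} HU {S T}.
Arguments ultra_or_compl {I U} HU S.
Arguments ultra_all {I U} HU {S}.
Arguments ultraN {I U} HU S.
Arguments ultraU {I U} HU {S T}.
Arguments ultra_forall_fin {I U} HU {n} S.

Section UltraproductConstruction.
Variables (L : Lang) (I : Type) (U : (I -> Prop) -> Prop) (Bs : I -> structure L).
Hypothesis HU : ultrafilter U.

Definition uclass (a : forall i, Bs i) : (forall i, Bs i) -> Prop :=
  fun b => U (fun i => a i = b i).

Definition ucarrier : Type := { P : (forall i, Bs i) -> Prop | exists a, P = uclass a }.

Definition urep (x : ucarrier) : forall i, Bs i :=
  proj1_sig (constructive_indefinite_description _ (proj2_sig x)).

Definition uproj (a : forall i, Bs i) : ucarrier := exist _ (uclass a) (ex_intro _ a eq_refl).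

Definition ultraproduct : structure L :=
  {| carrier := ucarrier;
     interp := fun f args => uproj (fun i => interp (Bs i) f (fun k => urep (args k) i)) |}.

Lemma uproj_eq (a b : forall i, Bs i) : uproj a = uproj b <-> U (fun i => a i = b i).
Proof.
  split.
  - intro Hab. assert (Hb : uclass b b) by (apply (ultra_all HU); auto).
    apply (f_equal (@proj1_sig _ _)) in Hab. simpl in Hab. rewrite <- Hab in Hb. exact Hb.
  - intro Hab. apply subset_eq_compat. apply functional_extensionality. intro c.
    apply propositional_extensionality. unfold uclass. split; intro Hc.
    + apply (ultraS HU (ultraI HU Hab Hc)). intros i [H1 H2]. congruence.
    + apply (ultraS HU (ultraI HU Hab Hc)). intros i [H1 H2]. congruence.
Qed.

Lemma uproj_urep (x : ucarrier) : uproj (urep x) = x.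
Proof.
  destruct x as [P HP]. apply subset_eq_compat. unfold urep. simpl.
  destruct constructive_indefinite_description as [a Ha]. simpl. symmetry. exact Ha.
Qed.

Lemma ultraproduct_is_ultraproduct : is_ultraproduct U Bs ultraproduct.
Proof.
  exists uproj. split; [|split].
  - intro x. exists (urep x). apply uproj_urep.
  - apply uproj_eq.
  - intros f args. simpl. apply uproj_eq.
    assert (Hrep : forall k, U (fun i => urep (uproj (args k)) i = args k i)).
    { intro k. apply uproj_eq. apply uproj_urep. }
    apply (ultraS HU (ultra_forall_fin HU _ Hrep)). intros i Hi.
    f_equal. apply functional_extensionality. intro k. symmetry. apply Hi.
Qed.
End UltraproductConstruction.

Arguments ultraproduct {L I} U Bs.
Arguments ultraproduct_is_ultraproduct {L I U} Bs HU.

Lemma upd_comp (A B : Type) (g : A -> B) (e : nat -> A) (x : nat) (a : A) :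
  (fun n => g (upd e x a n)) = upd (fun n => g (e n)) x (g a).
Proof. apply functional_extensionality. intro n. unfold upd. now destruct (Nat.eqb n x). Qed.

Arguments upd_comp {A B} g e x a.

Section Los.
Variables (L : Lang) (I : Type) (U : (I -> Prop) -> Prop) (Bs : I -> structure L).
Variables (B : structure L) (pi : (forall i, Bs i) -> B).
Hypothesis HU : ultrafilter U.
Hypothesis pi_surj : forall b, exists a, pi a = b.
Hypothesis pi_eq : forall a a', pi a = pi a' <-> U (fun i => a i = a' i).
Hypothesis pi_interp : forall f (args : Fin.t (arity L f) -> forall i, Bs i),
  pi (fun i => interp (Bs i) f (fun k => args k i)) = interp B f (fun k => pi (args k)).

Lemma eval_pi (t : term L) (ea : nat -> forall i, Bs i) :
  eval B (fun n => pi (ea n)) t = pi (fun i => eval (Bs i) (fun n => ea n i) t).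
Proof.
  induction t as [n|f a IH]; simpl; [reflexivity|].
  rewrite (pi_interp f (fun k i => eval (Bs i) (fun n => ea n i) (a k))).
  f_equal. apply functional_extensionality. intro k. apply IH.
Qed.

Lemma choose_witnesses (P : forall i, Bs i -> Prop) (d : forall i, Bs i) :
  exists a : forall i, Bs i, forall i, (exists b, P i b) -> P i (a i).
Proof.
  assert (H : forall i, exists b, (exists b', P i b') -> P i b).
  { intro i. destruct (classic (exists b', P i b')) as [[b Hb]|Hn].
    - exists b. auto.
    - exists (d i). intro H. contradiction. }
  exists (fun i => proj1_sig (constructive_indefinite_description _ (H i))).
  intro i. exact (proj2_sig (constructive_indefinite_description _ (H i))).
Qed.

Section Quantifier.
Variables (x : nat) (p : formula L).
Hypothesis los_p : forall ea : nat -> forall i, Bs i,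
  sat B (fun n => pi (ea n)) p <-> U (fun i => sat (Bs i) (fun n => ea n i) p).

Lemma los_Ex (ea : nat -> forall i, Bs i) :
  sat B (fun n => pi (ea n)) (Ex x p) <-> U (fun i => sat (Bs i) (fun n => ea n i) (Ex x p)).
Proof.
  simpl. split.
  - intros [b Hb]. destruct (pi_surj b) as [a <-].
    rewrite <- upd_comp, los_p in Hb. apply (ultraS HU Hb). intros i Hi.
    exists (a i). rewrite <- (upd_comp (fun c => c i)). exact Hi.
  - intro H.
    destruct (choose_witnesses (fun i b => sat (Bs i) (upd (fun n => ea n i) x b) p) (ea 0))
      as [a Ha].
    exists (pi a). rewrite <- upd_comp, los_p. apply (ultraS HU H). intros i Hi.
    rewrite (upd_comp (fun c => c i)). exact (Ha i Hi).
Qed.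

Lemma los_All (ea : nat -> forall i, Bs i) :
  sat B (fun n => pi (ea n)) (All x p) <-> U (fun i => sat (Bs i) (fun n => ea n i) (All x p)).
Proof.
  simpl. split.
  - intro H. apply NNPP. intro Hn. apply (ultraN HU) in Hn.
    destruct (choose_witnesses (fun i b => ~ sat (Bs i) (upd (fun n => ea n i) x b) p) (ea 0))
      as [a Ha].
    specialize (H (pi a)). rewrite <- upd_comp, los_p in H.
    apply (ultra_not_empty HU). apply (ultraS HU (ultraI HU H Hn)). intros i [Hi Hni].
    rewrite (upd_comp (fun c => c i)) in Hi. apply (Ha i); [|exact Hi].
    apply not_all_ex_not. exact Hni.
  - intros H b. destruct (pi_surj b) as [a <-]. rewrite <- upd_comp, los_p.
    apply (ultraS HU H). intros i Hi. rewrite (upd_comp (fun c => c i)). apply Hi.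
Qed.
End Quantifier.

Theorem los (phi : formula L) (ea : nat -> forall i, Bs i) :
  sat B (fun n => pi (ea n)) phi <-> U (fun i => sat (Bs i) (fun n => ea n i) phi).
Proof.
  revert ea.
  induction phi as [|t1 t2|p IH|p IHp q IHq|p IHp q IHq|p IHp q IHq|x p IH|x p IH];
    intro ea.
  - simpl. split; [tauto|]. apply (ultra_not_empty HU).
  - simpl. rewrite !eval_pi. apply pi_eq.
  - simpl. rewrite IH. symmetry. apply (ultraN HU).
  - simpl. rewrite IHp, IHq. split.
    + intros [H1 H2]. exact (ultraI HU H1 H2).
    + intro H. split; apply (ultraS HU H); tauto.
  - simpl. rewrite IHp, IHq. split.
    + intros [H|H]; apply (ultraS HU H); tauto.
    + apply (ultraU HU).
  - simpl. rewrite IHp, IHq. split.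
    + intro H. destruct (ultra_or_compl HU (fun i => sat (Bs i) (fun n => ea n i) p)) as [Hp|Hnp].
      * apply (ultraS HU (H Hp)). tauto.
      * apply (ultraS HU Hnp). tauto.
    + intros H Hp. apply (ultraS HU (ultraI HU H Hp)). tauto.
  - exact (los_Ex x p IH ea).
  - exact (los_All x p IH ea).
Qed.
End Los.

Arguments los {L I U Bs B pi} HU pi_surj pi_eq pi_interp phi ea.

Definition ultraproduct_closed (L : Lang) (Q : structure L -> Prop) : Prop :=
  forall (I : Type) (U : (I -> Prop) -> Prop) (Bs : I -> structure L) (B : structure L),
    ultrafilter U -> (forall i, Q (Bs i)) -> is_ultraproduct U Bs B -> Q B.

Arguments ultraproduct_closed {L} Q.

Lemma models_ultraproduct_closed (L : Lang) (T : theory L) :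
  ultraproduct_closed (models T).
Proof.
  intros I U Bs B HU HBs (pi & Hsurj & Heq & Hop) phi Hphi e.
  destruct (choice (fun n a => pi a = e n) (fun n => Hsurj (e n))) as [ea Hea].
  replace e with (fun n => pi (ea n)) by (apply functional_extensionality; auto).
  apply (los HU Hsurj Heq Hop). apply (ultra_all HU). intro i. apply HBs, Hphi.
Qed.

Arguments models_ultraproduct_closed {L} T.

Section Syntax.
Variable L : Lang.

Lemma tvars_mono (P P' : nat -> Prop) (t : term L) :
  (forall n, P n -> P' n) -> tvars_in P t -> tvars_in P' t.
Proof. induction t as [n|f a IH]; simpl; eauto. Qed.

Lemma fvars_mono (phi : formula L) : forall P P' : nat -> Prop,
  (forall n, P n -> P' n) -> fvars_in P phi -> fvars_in P' phi.
Proof.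
  induction phi; simpl; intros P P' HP H; try tauto.
  - destruct H. split; eapply tvars_mono; eauto.
  - eauto.
  - destruct H. split; eauto.
  - destruct H. split; eauto.
  - destruct H. split; eauto.
  - eapply IHphi; [|exact H]. simpl. intros m [->|Hm]; auto.
  - eapply IHphi; [|exact H]. simpl. intros m [->|Hm]; auto.
Qed.

Lemma eval_agree (A : structure L) (P : nat -> Prop) (e e' : nat -> A) (t : term L) :
  tvars_in P t -> (forall n, P n -> e n = e' n) -> eval A e t = eval A e' t.
Proof.
  induction t as [n|f a IH]; simpl; intros Ht He; auto.
  f_equal. apply functional_extensionality. intro k. eauto.
Qed.

Lemma upd_agree (X : Type) (P : nat -> Prop) (e e' : nat -> X) (x : nat) (a : X) :
  (forall n, P n -> e n = e' n) -> forall n, n = x \/ P n -> upd e x a n = upd e' x a n.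
Proof.
  intros He n Hn. unfold upd. destruct (Nat.eqb n x) eqn:E; auto.
  apply Nat.eqb_neq in E. destruct Hn; [congruence|auto].
Qed.

Lemma sat_agree (A : structure L) (phi : formula L) : forall (P : nat -> Prop) (e e' : nat -> A),
  fvars_in P phi -> (forall n, P n -> e n = e' n) -> (sat A e phi <-> sat A e' phi).
Proof.
  induction phi as [|t1 t2|p IH|p IHp q IHq|p IHp q IHq|p IHp q IHq|x p IH|x p IH];
    simpl; intros P e e' H He; try tauto.
  - destruct H as [H1 H2].
    now rewrite (eval_agree _ _ _ _ t1 H1 He), (eval_agree _ _ _ _ t2 H2 He).
  - now rewrite (IH P e e' H He).
  - destruct H as [Hp Hq]. now rewrite (IHp P e e' Hp He), (IHq P e e' Hq He).
  - destruct H as [Hp Hq]. now rewrite (IHp P e e' Hp He), (IHq P e e' Hq He).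
  - destruct H as [Hp Hq]. now rewrite (IHp P e e' Hp He), (IHq P e e' Hq He).
  - assert (Hx : forall a, sat A (upd e x a) p <-> sat A (upd e' x a) p)
      by (intro a; exact (IH _ _ _ H (upd_agree _ _ _ _ x a He))).
    split; intros [a Ha]; exists a; apply Hx; exact Ha.
  - assert (Hx : forall a, sat A (upd e x a) p <-> sat A (upd e' x a) p)
      by (intro a; exact (IH _ _ _ H (upd_agree _ _ _ _ x a He))).
    split; intros Ha a; apply Hx; apply Ha.
Qed.

Lemma upd_same (X : Type) (e : nat -> X) (x : nat) : upd e x (e x) = e.
Proof.
  apply functional_extensionality. intro n. unfold upd.
  destruct (Nat.eqb n x) eqn:E; auto. apply Nat.eqb_eq in E. now subst.
Qed.

Lemma eval_hom (A B : structure L) (h : A -> B) (e : nat -> A) (t : term L) :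
  hom A B h -> eval B (fun n => h (e n)) t = h (eval A e t).
Proof.
  intro Hh. induction t as [n|f a IH]; simpl; auto.
  rewrite Hh. f_equal. apply functional_extensionality. auto.
Qed.

Lemma sat_qfree_embedding (A B : structure L) (h : A -> B) (e : nat -> A) (phi : formula L) :
  embedding A B h -> qfree phi -> (sat B (fun n => h (e n)) phi <-> sat A e phi).
Proof.
  intros [Hh Hinj]. induction phi; simpl; intro Hq; try tauto.
  rewrite !eval_hom by exact Hh. split; [apply Hinj|congruence].
Qed.

Lemma embedding_id (A : structure L) : embedding A A (fun a => a).
Proof. split; [intros f args; reflexivity|auto]. Qed.

Lemma subalgebra_embedding (A : structure L) (P : A -> Prop) (HP : op_closed A P) :
  embedding (@subalgebra L A P HP) A (@proj1_sig _ _).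
Proof.
  split; [intros f args; reflexivity|].
  intros [a Ha] [b Hb] Hab. now apply subset_eq_compat.
Qed.

Lemma sat_eq_conj (A : structure L) (e : nat -> A) (eqs : list (term L * term L)) :
  sat A e (eq_conj eqs) <-> (forall p, In p eqs -> eval A e (fst p) = eval A e (snd p)).
Proof.
  induction eqs as [|[t1 t2] eqs IH]; simpl.
  - split; [intros _ p []|intros _ H; exact H].
  - rewrite IH. split.
    + intros [H1 H2] p [<-|Hp]; auto.
    + intro H. split; [apply (H (t1, t2)); auto|intros p Hp; apply H; auto].
Qed.

Lemma qfree_eq_conj (eqs : list (term L * term L)) : qfree (eq_conj eqs).
Proof. induction eqs; simpl; auto. Qed.

Lemma fvars_eq_conj (P : nat -> Prop) (eqs : list (term L * term L)) :
  (forall p, In p eqs -> tvars_in P (fst p) /\ tvars_in P (snd p)) -> fvars_in P (eq_conj eqs).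
Proof.
  induction eqs as [|p eqs IH]; simpl; intro H; [exact I|].
  split; [apply H; now left|]. apply IH. intros q Hq. apply H. now right.
Qed.

Definition conjs (l : list (formula L)) : formula L :=
  fold_right (fun p acc => Conj p acc) (Neg Fal) l.

Lemma sat_conjs (A : structure L) (e : nat -> A) (l : list (formula L)) :
  sat A e (conjs l) <-> (forall p, In p l -> sat A e p).
Proof.
  induction l as [|p l IH]; simpl.
  - split; [intros _ q []|intros _ H; exact H].
  - rewrite IH. split.
    + intros [H1 H2] q [<-|Hq]; auto.
    + intro H. split; [apply H; auto|intros q Hq; apply H; auto].
Qed.

Lemma qfree_conjs (l : list (formula L)) : (forall p, In p l -> qfree p) -> qfree (conjs l).
Proof.
  induction l as [|p l IH]; simpl; intro H; [exact I|].
  split; [apply H; auto|]. apply IH. auto.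
Qed.

Lemma fvars_conjs (P : nat -> Prop) (l : list (formula L)) :
  (forall p, In p l -> fvars_in P p) -> fvars_in P (conjs l).
Proof.
  induction l as [|p l IH]; simpl; intro H; [exact I|].
  split; [apply H; auto|]. apply IH. auto.
Qed.

Definition alls (xs : list nat) (p : formula L) : formula L :=
  fold_right (fun x q => All x q) p xs.

Lemma sat_alls (A : structure L) (xs : list nat) (p : formula L) :
  (forall e, sat A e p) -> forall e, sat A e (alls xs p).
Proof. induction xs; simpl; auto. Qed.

Lemma sat_alls_inst (A : structure L) (xs : list nat) (p : formula L) (e : nat -> A) :
  sat A e (alls xs p) -> sat A e p.
Proof.
  induction xs as [|x xs IH]; simpl; auto.
  intro H. specialize (H (e x)). rewrite upd_same in H. auto.
Qed.

Lemma universal_alls (xs : list nat) (p : formula L) : qfree p -> universal (alls xs p).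
Proof. intro Hq. induction xs; simpl; auto. destruct p; simpl in *; tauto. Qed.

Lemma fvars_alls (xs : list nat) : forall (P : nat -> Prop) (p : formula L),
  fvars_in (fun n => In n xs \/ P n) p -> fvars_in P (alls xs p).
Proof.
  induction xs as [|x xs IH]; simpl; intros P p H.
  - eapply fvars_mono; [|exact H]. intros n [[]|Hn]. exact Hn.
  - apply IH. eapply fvars_mono; [|exact H]. simpl. intros n [[Hn|Hn]|Hn]; auto.
Qed.
End Syntax.

Arguments conjs {L} l.
Arguments alls {L} xs p.

(* A map satisfying all facts about [A] is exactly an embedding of [A]. *)
Inductive fact (L : Lang) (A : structure L) : Type :=
| fact_op : forall f, (Fin.t (arity L f) -> A) -> fact L A
| fact_neq : forall a b : A, a <> b -> fact L A.

Arguments fact {L} A.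
Arguments fact_op {L A} f args.
Arguments fact_neq {L A} a b _.

Definition fact_holds (L : Lang) (A B : structure L) (g : A -> B) (fc : fact A) : Prop :=
  match fc with
  | fact_op f args => g (interp A f args) = interp B f (fun k => g (args k))
  | fact_neq a b _ => g a <> g b
  end.

Arguments fact_holds {L A B} g fc.

Section Compactness.
Variables (L : Lang) (Q : structure L -> Prop).
Hypothesis HQ : ultraproduct_closed Q.

Theorem compactness (Gamma : formula L -> Prop) :
  (forall l : list (formula L), exists (B : structure L) (e : nat -> B),
      Q B /\ forall phi, In phi l -> Gamma phi -> sat B e phi) ->
  exists (B : structure L) (e : nat -> B), Q B /\ forall phi, Gamma phi -> sat B e phi.
Proof.
  intro Hfin.
  assert (Hfin' : forall l, exists p : {B : structure L & nat -> B},
      Q (projT1 p) /\ forall phi, In phi l -> Gamma phi -> sat (projT1 p) (projT2 p) phi).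
  { intro l. destruct (Hfin l) as (B & e & HB). now exists (existT _ B e). }
  destruct (choice _ Hfin') as [c Hc].
  destruct (ultrafilter_on_lists (formula L)) as [U [HU HUin]].
  set (Bs := fun l => projT1 (c l)).
  pose proof (ultraproduct_is_ultraproduct Bs HU) as HB.
  pose proof HB as (pi & Hsurj & Heq & Hop).
  exists (ultraproduct U Bs), (fun n => pi (fun l => projT2 (c l) n)). split.
  - apply (HQ _ U Bs); [exact HU|intro l; apply Hc|exact HB].
  - intros phi Hphi. apply (los HU Hsurj Heq Hop).
    apply (ultraS HU (HUin phi)). intros l Hl. now apply Hc.
Qed.

Theorem embedding_compactness (A : structure L) (chi : formula L) (eA : nat -> A) :
  (forall F : list (fact A), exists (B : structure L) (g : A -> B),
      Q B /\ (forall fc, In fc F -> fact_holds g fc) /\ sat B (fun n => g (eA n)) chi) ->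
  exists (B : structure L) (h : A -> B),
    Q B /\ embedding A B h /\ sat B (fun n => h (eA n)) chi.
Proof.
  intro Hfin.
  assert (Hfin' : forall F, exists p : {B : structure L & A -> B},
      Q (projT1 p) /\ (forall fc, In fc F -> fact_holds (projT2 p) fc) /\
      sat (projT1 p) (fun n => projT2 p (eA n)) chi).
  { intro F. destruct (Hfin F) as (B & g & HB). now exists (existT _ B g). }
  destruct (choice _ Hfin') as [c Hc].
  destruct (ultrafilter_on_lists (fact A)) as [U [HU HUin]].
  set (Bs := fun F => projT1 (c F)).
  set (g := fun F => projT2 (c F) : A -> Bs F).
  pose proof (ultraproduct_is_ultraproduct Bs HU) as HB.
  pose proof HB as (pi & Hsurj & Heq & Hop).
  exists (ultraproduct U Bs), (fun a => pi (fun F => g F a)). split; [|split; [split|]].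
  - apply (HQ _ U Bs); [exact HU|intro F; apply Hc|exact HB].
  - intros f args. rewrite <- Hop. apply Heq.
    apply (ultraS HU (HUin (fact_op f args))). intros F HF. exact (proj1 (proj2 (Hc F)) _ HF).
  - intros a b Hab. apply Heq in Hab. apply NNPP. intro Hne.
    apply (ultra_not_empty HU). apply (ultraS HU (ultraI HU Hab (HUin (fact_neq a b Hne)))).
    intros F [HabF HF]. exact (proj1 (proj2 (Hc F)) _ HF HabF).
  - apply (los HU Hsurj Heq Hop chi (fun n F => g F (eA n))).
    apply (ultra_all HU). intro F. apply Hc.
Qed.
End Compactness.

Arguments compactness {L Q} HQ Gamma.
Arguments embedding_compactness {L Q} HQ A chi eA.

Fixpoint index_of {X : Type} (l : list X) (a : X) : nat :=
  match l with
  | [] => 0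
  | b :: l' => if excluded_middle_informative (a = b) then 0 else S (index_of l' a)
  end.

Lemma index_of_le {X : Type} (l : list X) (a : X) : index_of l a <= length l.
Proof.
  induction l as [|b l IH]; simpl; [lia|].
  destruct excluded_middle_informative; lia.
Qed.

Lemma nth_index_of {X : Type} (l : list X) (a d : X) : In a l -> nth (index_of l a) l d = a.
Proof.
  induction l as [|b l IH]; simpl; [tauto|]. intro H.
  destruct excluded_middle_informative as [->|Hne]; [reflexivity|].
  destruct H as [->|H]; [congruence|auto].
Qed.

Fixpoint fin_enum (n : nat) : list (Fin.t n) :=
  match n with
  | 0 => []
  | S n => Fin.F1 :: map Fin.FS (fin_enum n)
  end.

Lemma in_fin_enum (n : nat) (k : Fin.t n) : In k (fin_enum n).
Proof. induction k as [n|n k IH]; simpl; auto using in_map. Qed.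

Section FiniteDiagrams.
Variables (L : Lang) (A : structure L).

Definition fact_formula (name : A -> term L) (fc : fact A) : formula L :=
  match fc with
  | fact_op f args => Eq (Defs.app f (fun k => name (args k))) (name (interp A f args))
  | fact_neq a b _ => Neg (Eq (name a) (name b))
  end.

Definition diagram_formula (name : A -> term L) (F : list (fact A)) : formula L :=
  conjs (map (fact_formula name) F).

Lemma qfree_diagram_formula (name : A -> term L) (F : list (fact A)) :
  qfree (diagram_formula name F).
Proof.
  apply qfree_conjs. intros p Hp. apply in_map_iff in Hp.
  destruct Hp as [[f args|a b Hab] [<- _]]; simpl; auto.
Qed.

Lemma fvars_diagram_formula (P : nat -> Prop) (name : A -> term L) (F : list (fact A)) :
  (forall a, tvars_in P (name a)) -> fvars_in P (diagram_formula name F).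
Proof.
  intro Hname. apply fvars_conjs. intros p Hp. apply in_map_iff in Hp.
  destruct Hp as [[f args|a b Hab] [<- _]]; simpl; auto.
Qed.

Lemma diagram_formula_holds (B : structure L) (e : nat -> B) (name : A -> term L)
  (F : list (fact A)) :
  sat B e (diagram_formula name F) ->
  forall fc, In fc F -> fact_holds (fun a => eval B e (name a)) fc.
Proof.
  intros H fc Hfc. apply (proj1 (sat_conjs _ _ _ _)) with (p := fact_formula name fc) in H;
    [|now apply in_map].
  destruct fc as [f args|a b Hab]; simpl in *; auto.
Qed.

Definition fact_elems (fc : fact A) : list A :=
  match fc with
  | fact_op f args => interp A f args :: map args (fin_enum _)
  | fact_neq a b _ => [a; b]
  end.

Lemma sat_diagram_formula (C : structure L) (j : A -> C) (e : nat -> C)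
  (name : A -> term L) (F : list (fact A)) :
  embedding A C j ->
  (forall fc, In fc F -> forall a, In a (fact_elems fc) -> eval C e (name a) = j a) ->
  sat C e (diagram_formula name F).
Proof.
  intros [Hj Hinj] Hname. apply sat_conjs. intros p Hp. apply in_map_iff in Hp.
  destruct Hp as [fc [<- Hfc]]. specialize (Hname fc Hfc).
  destruct fc as [f args|a b Hab]; simpl in *.
  - rewrite Hname by now left. rewrite Hj. f_equal. apply functional_extensionality. intro k.
    apply Hname. right. apply in_map, in_fin_enum.
  - rewrite !Hname by auto. intro E. exact (Hab (Hinj _ _ E)).
Qed.

Definition elems (F : list (fact A)) : list A := flat_map fact_elems F.

Definition elem_var (F : list (fact A)) (a : A) : term L := var (index_of (elems F) a).

(* [index_of] sends elements outside [elems F] to [length (elems F)], whence the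
   extra quantified variable. *)
Definition negated_diagram (F : list (fact A)) : formula L :=
  alls (seq 0 (S (length (elems F)))) (Neg (diagram_formula (elem_var F) F)).

Lemma negated_diagram_sentence (F : list (fact A)) : sentence (negated_diagram F).
Proof.
  apply fvars_alls, fvars_diagram_formula. intro a. left.
  apply in_seq. pose proof (index_of_le (elems F) a). lia.
Qed.

Lemma negated_diagram_universal (F : list (fact A)) : universal (negated_diagram F).
Proof. apply universal_alls. apply qfree_diagram_formula. Qed.

Lemma negated_diagram_fails (F : list (fact A)) :
  inhabited A -> ~ forall e : nat -> A, sat A e (negated_diagram F).
Proof.
  intros [d] H. specialize (H (fun n => nth n (elems F) d)).
  apply sat_alls_inst in H. apply H.
  apply (sat_diagram_formula _ _ _ _ _ (embedding_id _ A)).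
  intros fc Hfc a Ha. apply nth_index_of. apply in_flat_map. eauto.
Qed.

Lemma negated_diagram_holds (B : structure L) (F : list (fact A)) :
  (forall e : nat -> B, ~ sat B e (diagram_formula (elem_var F) F)) ->
  forall e, sat B e (negated_diagram F).
Proof. intro H. apply sat_alls. exact H. Qed.

Definition models_universal_theory (Q : structure L -> Prop) : Prop :=
  forall phi, sentence phi -> universal phi ->
    (forall B, Q B -> forall e : nat -> B, sat B e phi) -> forall e : nat -> A, sat A e phi.

Lemma facts_realized_of_universal (Q : structure L -> Prop) :
  inhabited A ->
  models_universal_theory Q ->
  forall F : list (fact A), exists (B : structure L) (g : A -> B),
    Q B /\ forall fc, In fc F -> fact_holds g fc.
Proof.
  intros HA Huniv F.
  destruct (classic (exists (B : structure L) (e : nat -> B),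
                       Q B /\ sat B e (diagram_formula (elem_var F) F)))
    as [(B & e & HB & He)|Hn].
  - exists B, (fun a => eval B e (elem_var F a)). split; [exact HB|].
    exact (diagram_formula_holds _ _ _ _ He).
  - exfalso. apply (negated_diagram_fails F HA).
    apply Huniv; [apply negated_diagram_sentence|apply negated_diagram_universal|].
    intros B HB. apply negated_diagram_holds. intros e He. apply Hn. eauto.
Qed.

Theorem embeds_of_universal (Q : structure L -> Prop) :
  ultraproduct_closed Q -> inhabited A ->
  models_universal_theory Q ->
  exists (B : structure L) (h : A -> B), Q B /\ embedding A B h.
Proof.
  intros HQ HA Huniv. destruct HA as [a0].
  destruct (embedding_compactness HQ A (Neg Fal) (fun _ => a0)) as (B & h & HB & Hh & _).
  - intro F. destruct (facts_realized_of_universal Q (inhabits a0) Huniv F) as (B & g & HB & Hg).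
    exists B, g. simpl. auto.
  - eauto.
Qed.
End FiniteDiagrams.

Arguments diagram_formula {L A} name F.
Arguments diagram_formula_holds {L A B e name F} _ fc _.
Arguments sat_diagram_formula {L A C j e name F} _ _.
Arguments embeds_of_universal {L} A Q.

Lemma has_constant_inhabited (L : Lang) : has_constant L -> forall A : structure L, inhabited A.
Proof.
  intros [c Hc] A. constructor. refine (interp A c _).
  rewrite Hc. intro k. exact (Fin.case0 _ k).
Qed.

Section UniversalClass.
Variables (L : Lang) (K : structure L -> Prop).
Hypothesis HK : universal_class K.

Lemma universal_class_embedding (C B : structure L) (h : C -> B) :
  embedding C B h -> K B -> K C.
Proof.
  intros [Hh Hinj] HB.
  set (P := fun b : B => exists c, h c = b).
  assert (HP : op_closed B P).
  { intros f args Hargs. destruct (choice _ Hargs) as [c Hc].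
    exists (interp C f c). rewrite Hh. f_equal. apply functional_extensionality. exact Hc. }
  set (j := fun s : @subalgebra L B P HP =>
              proj1_sig (constructive_indefinite_description _ (proj2_sig s))).
  assert (Hj : forall s, h (j s) = proj1_sig s)
    by (intro s; exact (proj2_sig (constructive_indefinite_description _ (proj2_sig s)))).
  destruct HK as (Hiso & Hsub & _).
  apply (Hiso _ C j (Hsub B P HP HB)). split; [split|].
  - intros f args. apply Hinj. rewrite Hj, Hh. simpl. f_equal.
    apply functional_extensionality. intro k. now rewrite Hj.
  - intros s s' Hss'. apply (subalgebra_embedding _ B P HP). now rewrite <- !Hj, Hss'.
  - intro c. exists (exist P (h c) (ex_intro _ c eq_refl)). apply Hinj. now rewrite Hj.
Qed.

Lemma K_models_Th (A : structure L) : K A -> models (Th K) A.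
Proof. intros HA phi [_ Hphi] e. now apply Hphi. Qed.

Variable T : theory L.
Hypothesis same_universal : forall phi, sentence phi -> universal phi ->
  (entails (Th K) phi <-> entails T phi).
Hypothesis inh : forall A : structure L, inhabited A.

Lemma models_in_class (C : structure L) : models T C -> K C.
Proof.
  intro HC. destruct (embeds_of_universal C K) as (B & h & HB & Hh).
  - exact (proj2 (proj2 HK)).
  - apply inh.
  - intros phi Hs Hu Hphi e. apply (proj1 (same_universal phi Hs Hu)); [|exact HC].
    intros A HA. apply HA. split; assumption.
  - exact (universal_class_embedding C B h Hh HB).
Qed.

Lemma class_embeds_in_model (A : structure L) :
  K A -> exists (B : structure L) (h : A -> B), models T B /\ embedding A B h.
Proof.
  intro HA. apply embeds_of_universal.
  - apply models_ultraproduct_closed.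
  - apply inh.
  - intros phi Hs Hu Hphi. apply (proj2 (same_universal phi Hs Hu)); [exact Hphi|].
    now apply K_models_Th.
Qed.
End UniversalClass.

Arguments K_models_Th {L K A} _.
Arguments models_in_class {L K} HK {T} same_universal inh {C} _.
Arguments class_embeds_in_model {L K T} same_universal inh {A} _.

Section DiagramCompleteness.
Variables (L : Lang) (T : theory L) (M : structure L).

Definition expand_along (B : structure L) (h : M -> B) : structure (Lexp L M) :=
  {| carrier := B;
     interp := fun s =>
       match s return (Fin.t (arity (Lexp L M) s) -> B) -> B with
       | inl f => fun args => interp B f args
       | inr m => fun _ => h m
       end |}.

Lemma eval_tlift (B : structure L) (h : M -> B) (e : nat -> B) (t : term L) :
  eval (expand_along B h) e (tlift M t) = eval B e t.
Proof.
  induction t as [n|f a IH]; simpl; auto. f_equal. apply functional_extensionality. auto.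
Qed.

Lemma sat_flift (B : structure L) (h : M -> B) (phi : formula L) : forall e : nat -> B,
  sat (expand_along B h) e (flift M phi) <-> sat B e phi.
Proof.
  induction phi; intro e; simpl; rewrite ?eval_tlift; try tauto.
  - now rewrite IHphi.
  - now rewrite IHphi1, IHphi2.
  - now rewrite IHphi1, IHphi2.
  - now rewrite IHphi1, IHphi2.
  - split; intros [a Ha]; exists a; apply IHphi; auto.
  - split; intros Ha a; apply IHphi; auto.
Qed.

Lemma eval_expand_along (B : structure L) (h : M -> B) (e : nat -> M) (t : term (Lexp L M)) :
  hom M B h -> eval (expand_along B h) (fun n => h (e n)) t = h (eval (expand M) e t).
Proof.
  intro Hh. induction t as [n|[f|m] a IH]; simpl; auto.
  rewrite Hh. f_equal. apply functional_extensionality. intro k. apply IH.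
Qed.

Lemma expand_along_models (B : structure L) (h : M -> B) :
  inhabited M -> embedding M B h -> models T B ->
  models (fun psi => @lift_theory L M T psi \/ diagram M psi) (expand_along B h).
Proof.
  intros [m0] [Hh Hinj] HB psi [[phi [Hphi ->]]|(Hs & (t1 & t2 & Ht) & Hd)] e.
  - apply sat_flift. now apply HB.
  - apply (sat_agree _ _ psi (fun _ => False) e (fun _ => h m0) Hs).
    { intros n []. }
    specialize (Hd (fun _ => m0)).
    destruct Ht as [->| ->]; simpl in *; rewrite !eval_expand_along by exact Hh.
    + congruence.
    + intro E. apply Hd. apply Hinj. exact E.
Qed.

Fixpoint name_params (y : nat) (eA : nat -> M) (t : term L) : term (Lexp L M) :=
  match t with
  | var n => if Nat.eqb n y then var n
             else @Defs.app (Lexp L M) (inr (eA n)) (fun k => Fin.case0 _ k)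
  | Defs.app f a => @Defs.app (Lexp L M) (inl f) (fun k => name_params y eA (a k))
  end.

Lemma eval_name_params (B : structure L) (h : M -> B) y eA (g : nat -> B) (b : B) (t : term L) :
  eval (expand_along B h) (upd g y b) (name_params y eA t)
  = eval B (upd (fun n => h (eA n)) y b) t.
Proof.
  induction t as [n|f a IH]; simpl.
  - destruct (Nat.eqb n y) eqn:E; simpl; unfold upd; now rewrite E.
  - f_equal. apply functional_extensionality. auto.
Qed.

Lemma tvars_name_params y eA (t : term L) :
  tvars_in (fun n => n = y \/ False) (name_params y eA t).
Proof.
  induction t as [n|f a IH]; simpl; auto.
  destruct (Nat.eqb n y) eqn:E; simpl.
  - left. now apply Nat.eqb_eq.
  - intro k. destruct (Fin.case0 (fun _ => False) k).
Qed.

Definition ex_params (y : nat) (eA : nat -> M) (eqs : list (term L * term L))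
  : formula (Lexp L M) :=
  Ex y (eq_conj (map (fun p => (name_params y eA (fst p), name_params y eA (snd p))) eqs)).

Lemma ex_params_sentence y eA eqs : sentence (ex_params y eA eqs).
Proof.
  apply fvars_eq_conj. intros p Hp. apply in_map_iff in Hp.
  destruct Hp as [q [<- _]]. split; apply tvars_name_params.
Qed.

Lemma sat_ex_params (B : structure L) (h : M -> B) y eA eqs (g : nat -> B) :
  sat (expand_along B h) g (ex_params y eA eqs)
  <-> sat B (fun n => h (eA n)) (Ex y (eq_conj eqs)).
Proof.
  simpl. split; intros [b Hb]; exists b; rewrite sat_eq_conj in *.
  - intros p Hp. rewrite <- !(eval_name_params B h y eA g).
    exact (Hb _ (in_map (fun p => (name_params y eA (fst p), name_params y eA (snd p))) _ _ Hp)).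
  - intros p Hp. apply in_map_iff in Hp. destruct Hp as [q [<- Hq]]. simpl.
    rewrite !eval_name_params. exact (Hb q Hq).
Qed.

Hypothesis diagram_complete : complete (fun psi => @lift_theory L M T psi \/ diagram M psi).

Theorem existential_transfer (B1 B2 : structure L) (h1 : M -> B1) (h2 : M -> B2)
  (eA : nat -> M) (y : nat) (eqs : list (term L * term L)) :
  models T B1 -> models T B2 -> embedding M B1 h1 -> embedding M B2 h2 ->
  sat B1 (fun n => h1 (eA n)) (Ex y (eq_conj eqs)) ->
  sat B2 (fun n => h2 (eA n)) (Ex y (eq_conj eqs)).
Proof.
  intros HB1 HB2 Hh1 Hh2 Hsat.
  pose proof (inhabits (eA 0)) as HM.
  destruct (diagram_complete _ (ex_params_sentence y eA eqs)) as [Hc|Hc].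
  - apply (sat_ex_params B2 h2 y eA eqs (fun n => h2 (eA n))).
    apply Hc. now apply expand_along_models.
  - exfalso.
    apply (Hc (expand_along B1 h1) (expand_along_models B1 h1 HM Hh1 HB1) (fun n => h1 (eA n))).
    now apply sat_ex_params.
Qed.
End DiagramCompleteness.

Arguments existential_transfer {L T M} diagram_complete B1 B2 h1 h2 eA y eqs.

Section VariableProjection.
Variables (L : Lang) (K : structure L -> Prop) (T : theory L).
Hypothesis HK : universal_class K.
Hypothesis inh : forall A : structure L, inhabited A.
Hypothesis same_universal : forall phi, sentence phi -> universal phi ->
  (entails (Th K) phi <-> entails T phi).
Hypothesis diagram_complete : forall M : structure L, models (Th K) M ->
  complete (fun psi => @lift_theory L M T psi \/ diagram M psi).

Variables (xs : list nat) (y : nat) (eqs : list (term L * term L)).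
Hypothesis eqs_vars : forall p, In p eqs ->
  tvars_in (fun v => In v xs \/ v = y) (fst p) /\ tvars_in (fun v => In v xs \/ v = y) (snd p).

Definition solvable : formula L := Ex y (eq_conj eqs).

Lemma fvars_solvable : fvars_in (fun v => In v xs) solvable.
Proof.
  apply fvars_eq_conj. intros p Hp. destruct (eqs_vars p Hp) as [H1 H2].
  split; (eapply tvars_mono; [|eassumption]); intros n [Hn|Hn]; auto.
Qed.

Definition qf_consequence (psi : formula L) : Prop :=
  qfree psi /\ fvars_in (fun v => In v xs) psi /\
  forall (C : structure L) (e : nat -> C), models T C -> sat C e solvable -> sat C e psi.

Section GeneratedSubalgebra.
Variables (C : structure L) (e : nat -> C).
Hypothesis HC : models T C.
Hypothesis sat_consequences : forall psi, qf_consequence psi -> sat C e psi.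

Definition generated (c : C) : Prop := exists t, tvars_in (fun v => In v xs) t /\ eval C e t = c.

Lemma generated_op_closed : op_closed C generated.
Proof.
  intros f args Hargs. destruct (choice _ Hargs) as [ts Hts].
  exists (Defs.app f ts). split; [intro k; apply Hts|].
  simpl. f_equal. apply functional_extensionality. intro k. apply Hts.
Qed.

Definition span : structure L := @subalgebra L C generated generated_op_closed.

Definition span_name (a : span) : term L :=
  proj1_sig (constructive_indefinite_description _ (proj2_sig a)).

Lemma span_name_spec (a : span) :
  tvars_in (fun v => In v xs) (span_name a) /\ eval C e (span_name a) = proj1_sig a.
Proof. exact (proj2_sig (constructive_indefinite_description _ (proj2_sig a))). Qed.

(* Outside [xs] the value is irrelevant. *)
Definition span_env (n : nat) : span :=
  match excluded_middle_informative (In n xs) with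
  | left Hn => exist generated (e n) (ex_intro _ (var n) (conj Hn eq_refl))
  | right _ => epsilon (inh span) (fun _ => True)
  end.

Lemma span_env_spec (n : nat) : In n xs -> proj1_sig (span_env n) = e n.
Proof. intro Hn. unfold span_env. now destruct excluded_middle_informative. Qed.

Definition facts_formula (F : list (fact span)) : formula L :=
  Conj (diagram_formula span_name F)
       (eq_conj (map (fun x => (span_name (span_env x), var x)) xs)).

Lemma sat_facts_formula (F : list (fact span)) : sat C e (facts_formula F).
Proof.
  split.
  - apply (sat_diagram_formula (subalgebra_embedding _ C _ _)).
    intros _ _ a _. apply span_name_spec.
  - apply sat_eq_conj. intros p Hp. apply in_map_iff in Hp. destruct Hp as [x [<- Hx]].
    simpl. rewrite (proj2 (span_name_spec _)). now apply span_env_spec.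
Qed.

Lemma facts_realized_with_solution (F : list (fact span)) :
  exists (B : structure L) (g : span -> B),
    models T B /\ (forall fc, In fc F -> fact_holds g fc) /\
    sat B (fun n => g (span_env n)) solvable.
Proof.
  destruct (classic (exists (B : structure L) (eB : nat -> B),
      models T B /\ sat B eB (facts_formula F) /\ sat B eB solvable))
    as [(B & eB & HB & [Hdiag Henv] & Hsol)|Hn].
  - exists B, (fun a => eval B eB (span_name a)). split; [exact HB|split].
    + exact (diagram_formula_holds Hdiag).
    + refine (proj1 (sat_agree _ _ _ _ _ _ fvars_solvable _) Hsol).
      intros n Hn. rewrite sat_eq_conj in Henv.
      symmetry. exact (Henv _ (in_map (fun x => (span_name (span_env x), var x)) _ _ Hn)).
  - exfalso. apply (sat_consequences (Neg (facts_formula F))); [|apply sat_facts_formula].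
    split; [|split].
    + split; [apply qfree_diagram_formula|apply qfree_eq_conj].
    + split.
      * apply fvars_diagram_formula. intro a. apply span_name_spec.
      * apply fvars_eq_conj. intros p Hp. apply in_map_iff in Hp. destruct Hp as [x [<- Hx]].
        split; [apply span_name_spec|exact Hx].
    + intros B eB HB Hsol Hf. apply Hn. eauto.
Qed.

Lemma consequences_force_solvable : sat C e solvable.
Proof.
  assert (Hspan : K span)
    by (apply (proj1 (proj2 HK)); exact (models_in_class HK same_universal inh HC)).
  destruct (embedding_compactness (models_ultraproduct_closed T) span solvable span_env
              facts_realized_with_solution) as (D & h & HD & Hh & HDsol).
  pose proof (existential_transfer (diagram_complete span (K_models_Th Hspan))
                D C h (@proj1_sig _ _) span_env y eqs
                HD HC Hh (subalgebra_embedding _ C _ _) HDsol) as HCsol.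
  refine (proj1 (sat_agree _ _ _ _ _ _ fvars_solvable _) HCsol). exact span_env_spec.
Qed.
End GeneratedSubalgebra.

Lemma finite_consequences : exists l : list (formula L),
  (forall psi, In psi l -> qf_consequence psi) /\
  forall (C : structure L) (e : nat -> C), models T C -> (forall psi, In psi l -> sat C e psi) ->
    sat C e solvable.
Proof.
  apply NNPP. intro Hno.
  destruct (compactness (models_ultraproduct_closed T)
              (fun psi => qf_consequence psi \/ psi = Neg solvable)) as (C & e & HC & Hsat).
  - intro l.
    set (cons_l := filter (fun psi => if excluded_middle_informative (qf_consequence psi)
                                      then true else false) l).
    assert (Hcons_l : forall psi, In psi cons_l <-> In psi l /\ qf_consequence psi).
    { intro psi. unfold cons_l. rewrite filter_In.
      destruct excluded_middle_informative; intuition congruence. }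
    apply NNPP. intro Hn. apply Hno. exists cons_l. split; [intros psi Hpsi; now apply Hcons_l|].
    intros C e HC Hl. apply NNPP. intro Hnsol. apply Hn. exists C, e. split; [exact HC|].
    intros psi Hpsi [Hc| ->]; [apply Hl, Hcons_l; auto|exact Hnsol].
  - apply (Hsat (Neg solvable)); [now right|].
    apply (consequences_force_solvable C e HC). intros psi Hpsi. apply Hsat. now left.
Qed.

Lemma solution_implies_consequences (l : list (formula L)) :
  (forall psi, In psi l -> qf_consequence psi) -> Kvalid K (Imp (eq_conj eqs) (conjs l)).
Proof.
  intros Hl A HA e Hsol. simpl in Hsol.
  destruct (class_embeds_in_model same_universal inh HA) as (B & h & HB & Hh).
  apply sat_conjs. intros psi Hpsi. destruct (Hl psi Hpsi) as (Hq & _ & Himp).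
  apply (sat_qfree_embedding _ _ _ h e _ Hh Hq). apply Himp; [exact HB|].
  exists (h (e y)). rewrite (upd_same _ (fun n => h (e n)) y).
  now apply (sat_qfree_embedding _ _ _ h e _ Hh (qfree_eq_conj _ _)).
Qed.

Lemma consequences_project (l : list (formula L)) :
  ~ In y xs ->
  (forall psi, In psi l -> qfree psi) ->
  (forall (C : structure L) (e : nat -> C), models T C -> (forall psi, In psi l -> sat C e psi) ->
     sat C e solvable) ->
  forall t1 t2 : term L,
    tvars_in (fun v => In v xs) t1 -> tvars_in (fun v => In v xs) t2 ->
    Kvalid K (Imp (eq_conj eqs) (Eq t1 t2)) -> Kvalid K (Imp (conjs l) (Eq t1 t2)).
Proof.
  intros Hy Hq Hsol t1 t2 Ht1 Ht2 Hvalid A HA e Hl. simpl in Hl |- *.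
  destruct (class_embeds_in_model same_universal inh HA) as (B & h & HB & Hh).
  apply (sat_qfree_embedding _ _ _ h e _ Hh (qfree_conjs _ _ Hq)) in Hl.
  rewrite sat_conjs in Hl.
  destruct (Hsol B _ HB Hl) as [b Hb].
  specialize (Hvalid B (models_in_class HK same_universal inh HB) _ Hb). simpl in Hvalid.
  assert (Hxs : forall t, tvars_in (fun v => In v xs) t ->
             eval B (upd (fun n => h (e n)) y b) t = h (eval A e t)).
  { intros t Ht. rewrite <- eval_hom by apply Hh. apply (eval_agree _ _ _ _ _ _ Ht).
    intros n Hn. unfold upd. destruct (Nat.eqb n y) eqn:E; [|reflexivity].
    apply Nat.eqb_eq in E. subst. contradiction. }
  rewrite !Hxs in Hvalid by assumption. now apply Hh.
Qed.
End VariableProjection.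

Arguments finite_consequences {L K T} HK inh same_universal diagram_complete {xs y eqs} eqs_vars.
Arguments solution_implies_consequences {L K T} inh same_universal {xs y eqs l} _.
Arguments consequences_project {L K T} HK inh same_universal {xs y eqs l} _ _ _.

Theorem proposition3p7 (L : Lang) (K : structure L -> Prop) :
  has_constant L ->
  universal_class K ->
  (exists Tstar : theory L, model_completion (Th K) Tstar) ->
  var_projection K.
Proof.
  intros hc HK [Tstar (_ & same_universal & diagram_complete)] xs y Hy eqs Heqs.
  pose proof (has_constant_inhabited L hc) as inh.
  destruct (finite_consequences HK inh same_universal diagram_complete Heqs)
    as (l & Hcons & Hsol).
  assert (Hqf : forall psi, In psi l -> qfree psi) by (intros psi Hpsi; apply Hcons, Hpsi).
  exists (conjs l). split; [|split; [|split]].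
  - now apply qfree_conjs.
  - apply fvars_conjs. intros psi Hpsi. apply Hcons, Hpsi.
  - exact (solution_implies_consequences inh same_universal Hcons).
  - exact (consequences_project HK inh same_universal Hy Hqf Hsol).
Qed.
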